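(* Let $n\in\mathbb N$ and let $A$ be a partition of $\{1,\dots,2n\}$. For $u=(u_0,u_1,\dots,u_{2n})\in(\mathbb R^d)^{2n+1}$ write $M_A(u):=M_A((u_l)_{l\in I_A})$. Then for all $j\in\{2,\dots,2n+1\}$ with $j-1\in I_A$, $$u_0+\sum_{l=1}^{j-1}[M_A(u)]_l=u_{j-1}+u_0+\sum_{l\in\{1,\dots,j-2\}\cap I_A}\sigma_{A,j-2}(l)\,u_l.$$
   Context: $J_A=\{\max a:a\in A\}$, $I_A=\{1,\dots,2n\}\setminus J_A$, and $a(l)$ denotes the block of $A$ containing $l$. For $w=(w_l)_{l\in I_A}\in(\mathbb R^d)^{I_A}$, $M_A(w)\in(\mathbb R^d)^{2n}$ is defined by $[M_A(w)]_j=w_j$ if $j\in I_A$ and $[M_A(w)]_j=-\sum_{l\in a(j)\setminus\{j\}}w_l$ if $j\in J_A$. For $j\in\{0,\dots,2n+1\}$, $\sigma_{A,j}:\{1,\dots,2n\}\to\{0,1\}$ is $\sigma_{A,j}(l)=1$ if $\max a(l)>j$ and $0$ otherwise. *)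

From HB Require Import structures.
From mathcomp Require Import all_boot all_order all_algebra.
Set Implicit Arguments. Unset Strict Implicit. Unset Printing Implicit Defensive.
Import Order.TTheory GRing.Theory Num.Theory.
Local Open Scope ring_scope.

(* The ground set {1,...,2n} is [set i : 'I_(2n).+1 | i != ord0]
   (index 0 is excluded, so that indices are literally 1..2n). *)
Definition ground (n : nat) : {set 'I_(2 * n).+1} :=
  [set i : 'I_(2 * n).+1 | i != ord0].

Definition blk (n : nat) (A : {set {set 'I_(2 * n).+1}}) (l : nat)
  : {set 'I_(2 * n).+1} := pblock A (inord l).

Definition maxblk (n : nat) (A : {set {set 'I_(2 * n).+1}}) (l : nat) : nat :=
  \max_(k in blk A l) (k : nat).

Definition inJ (n : nat) (A : {set {set 'I_(2 * n).+1}}) (l : nat) : bool :=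
  [&& (1 <= l)%N, (l <= 2 * n)%N & maxblk A l == l].

Definition inI (n : nat) (A : {set {set 'I_(2 * n).+1}}) (l : nat) : bool :=
  [&& (1 <= l)%N, (l <= 2 * n)%N & ~~ inJ A l].

(* [M_A(w)]_j, for w indexed by nat (only the values w_l, l \in I_A, matter). *)
Definition MA (R : ringType) (d n : nat) (A : {set {set 'I_(2 * n).+1}})
  (w : nat -> 'rV[R]_d) (j : nat) : 'rV[R]_d :=
  if inI A j then w j
  else - \sum_(k in blk A j | (k : nat) != j) w (k : nat).

Definition sigmaA (n : nat) (A : {set {set 'I_(2 * n).+1}}) (j l : nat) : nat :=
  if (j < maxblk A l)%N then 1%N else 0%N.

From HB Require Import structures.
From mathcomp Require Import all_boot all_order all_algebra.
From mathcomp Require Import zify.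
Set Implicit Arguments. Unset Strict Implicit.
Import Order.TTheory GRing.Theory Num.Theory.
Local Open Scope ring_scope.

(* Read the partial sums of M_A(u) as a process in time m: an index l of I_A
   is "opened" at time l, contributing u_l, and stays open until the maximum
   of its block is reached; at that time the entry of M_A(u) is minus the sum
   of the u_l over the rest of the block, which closes all of them at once.
   So the partial sum up to m is the sum of the u_l, l in I_A, l <= m, whose
   block maximum exceeds m, i.e. with sigma_{A,m}(l) = 1. *)

Section Blocks.

Variables (n : nat) (A : {set {set 'I_(2 * n).+1}}).
Hypothesis partA : partition A (ground n).

Let coverA : cover A = ground n.
Proof. by case/and3P: partA => /eqP. Qed.

Lemma mem_blk l : (1 <= l <= 2 * n)%N -> inord l \in blk A l.
Proof. by move=> l_range; rewrite /blk mem_pblock coverA inE -val_eqE /= inordK; lia. Qed.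

Lemma blk_mem l (k : 'I_(2 * n).+1) : k \in blk A l -> blk A k = blk A l.
Proof. by rewrite /blk inord_val; case/and3P: partA => _ trivA _; apply: same_pblock. Qed.

Lemma blk_range l (k : 'I_(2 * n).+1) : k \in blk A l -> (1 <= k <= 2 * n)%N.
Proof.
move=> kAl; have : k \in blk A k by rewrite (blk_mem kAl).
rewrite /blk inord_val mem_pblock coverA inE -val_eqE /=.
by have := ltn_ord k; lia.
Qed.

Lemma leq_maxblk l (k : 'I_(2 * n).+1) : k \in blk A l -> (k <= maxblk A l)%N.
Proof. exact: (@leq_bigmax_cond _ (fun i => i \in blk A l) (fun k : 'I_(2 * n).+1 => k : nat)). Qed.

Lemma maxblk_in_blk l : (1 <= l <= 2 * n)%N ->
  exists2 k : 'I_(2 * n).+1, k \in blk A l & val k = maxblk A l.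
Proof.
move=> l_range; have : (0 < #|blk A l|)%N by apply/card_gt0P; exists (inord l); apply: mem_blk.
by case/(eq_bigmax_cond (fun k : 'I_(2 * n).+1 => k : nat)) => k kAl maxk; exists k.
Qed.

Lemma maxblk_mem l (k : 'I_(2 * n).+1) : k \in blk A l -> maxblk A k = maxblk A l.
Proof. by move=> kAl; rewrite /maxblk (blk_mem kAl). Qed.

Lemma inJ_maxblk l : (1 <= l <= 2 * n)%N -> inJ A (maxblk A l).
Proof.
move=> l_range; have [k kAl kmax] := maxblk_in_blk l_range.
by rewrite -kmax /inJ (maxblk_mem kAl) kmax eqxx andbT -kmax (blk_range kAl).
Qed.

Lemma inI_maxblk_neq l p : (1 <= l <= 2 * n)%N -> inI A p -> maxblk A l != p.
Proof. by move=> l_range; apply: contraTneq => <-; rewrite /inI inJ_maxblk //= !andbF. Qed.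

Lemma inI_lt_maxblk l : inI A l -> (l < maxblk A l)%N.
Proof.
case/and3P=> l_ge1 l_le; rewrite /inJ l_ge1 l_le /= ltn_neqAle eq_sym => -> /=.
have l_range : (1 <= l <= 2 * n)%N by rewrite l_ge1.
by have := leq_maxblk (mem_blk l_range); rewrite inordK //; lia.
Qed.

Lemma mem_blk_inJ l p : (1 <= l <= 2 * n)%N -> inJ A p ->
  (inord l \in blk A p) = (maxblk A l == p).
Proof.
move=> l_range /and3P [p_ge1 p_le /eqP maxp].
apply/idP/eqP => [lAp | maxl].
  by rewrite -maxp -(maxblk_mem lAp) inordK //; lia.
have [k kAl kp] := maxblk_in_blk l_range.
have -> : blk A p = blk A k by rewrite kp maxl.
by rewrite (blk_mem kAl) mem_blk.
Qed.

Lemma sum_blk_inJ (R : nzRingType) (d : nat) (u : nat -> 'rV[R]_d) p : inJ A p ->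
  \sum_(k in blk A p | val k != p) u k
  = \sum_(1 <= l < p | inI A l) (maxblk A l == p)%:R *: u l.
Proof.
move=> Jp; rewrite (big_nat_widen _ _ (2 * n).+1); last by case/and3P: Jp => _ /leqW.
rewrite big_geq_mkord big_mkcond [RHS]big_mkcond /=; apply: eq_bigr => k _.
have [k0 | k_pos] := posnP k.
  by rewrite k0 /=; case: ifP => // /andP [/blk_range]; rewrite k0.
have k_range : (1 <= k <= 2 * n)%N by have := ltn_ord k; lia.
have := mem_blk_inJ k_range Jp; rewrite inord_val => ->.
have [maxk | _] := eqVneq (maxblk A k) p; last by case: ifP; rewrite ?scale0r.
have := leq_maxblk (mem_blk k_range); rewrite inordK ?maxk; last lia.
move=> k_le_p; rewrite /inI /inJ maxk; case/andP: k_range => -> -> /=.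
by rewrite (eq_sym p) ltn_neqAle k_le_p andbT scale1r; case: (_ != _).
Qed.

End Blocks.

Lemma sigmaA_S n (A : {set {set 'I_(2 * n).+1}}) m l :
  sigmaA A m l = (sigmaA A m.+1 l + (maxblk A l == m.+1))%N.
Proof. by rewrite /sigmaA; case: ifP; case: ifP; case: eqP; lia. Qed.

Lemma sum_MA (R : nzRingType) (d n : nat) (A : {set {set 'I_(2 * n).+1}})
    (u : nat -> 'rV[R]_d) m :
  partition A (ground n) -> (m <= 2 * n)%N ->
  \sum_(1 <= l < m.+1) MA A u l
  = \sum_(1 <= l < m.+1 | inI A l) (sigmaA A m l)%:R *: u l.
Proof.
move=> partA; elim: m => [|m IH] m_le; first by rewrite !big_geq.
rewrite big_nat_recr // IH; last lia.
have closed_now : \sum_(1 <= l < m.+1 | inI A l) (sigmaA A m l)%:R *: u l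
    = \sum_(1 <= l < m.+1 | inI A l) (sigmaA A m.+1 l)%:R *: u l
    + \sum_(1 <= l < m.+1 | inI A l) (maxblk A l == m.+1)%:R *: u l.
  by rewrite -big_split; apply: eq_bigr => l _; rewrite sigmaA_S natrD scalerDl.
rewrite closed_now [RHS]big_mkcond big_nat_recr //= -big_mkcond /MA -addrA.
case: ifP => [Im | notIm].
- rewrite /sigmaA inI_lt_maxblk // scale1r; congr (_ + _).
  rewrite big1_seq ?add0r // => l /andP [_]; rewrite mem_index_iota => l_range.
  by rewrite (negbTE (inI_maxblk_neq partA _ Im)) ?scale0r //; lia.
- have Jm : inJ A m.+1 by move: notIm; rewrite /inI /inJ; case: eqP => //; lia.
  by rewrite (sum_blk_inJ partA) // subrr addr0.
Qed.

Theorem lemma10 (R : realFieldType) (d n : nat)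
  (A : {set {set 'I_(2 * n).+1}}) (u : nat -> 'rV[R]_d) (j : nat) :
  partition A (ground n) ->
  (2 <= j)%N -> (j <= (2 * n).+1)%N -> inI A j.-1 ->
  u 0%N + \sum_(1 <= l < j) MA A u l
  = u j.-1 + u 0%N
    + \sum_(1 <= l < j.-1 | inI A l) (sigmaA A (j - 2) l)%:R *: u l.
Proof.
case: j => [|[|m]] // partA _ j_le Im /=.
rewrite subn2 /= big_nat_recr //= sum_MA //; last lia.
by rewrite /MA Im [_ + u m.+1]addrC addrA [u 0%N + _]addrC.
Qed.
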